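(* Let $\mathfrak m\in\mathbf R$, $\overline{\mathfrak m}=\max\{\mathfrak m,0\}$, $\lambda>0$, $\varepsilon>0$, $t>0$ and $m\ge1$ an integer. Define, with the convention $s_{m+1}=s_1$, $$\Phi_m(s_1,\dots,s_m)=\prod_{k=1}^m\frac{\lambda^2e^{\mathfrak m(s_k+s_{k+1})}}{2\pi(s_k+s_{k+1}+2\varepsilon^2)}.$$ Then $$\int_{[0,t]^m}\Phi_m(s_1,\dots,s_m)\,ds_1\cdots ds_m\le\frac{(\lambda e^{\overline{\mathfrak m}t})^{2m}}{2^m\pi}\log\Big(1+\frac{t}{\varepsilon^2}\Big).$$ *)

From HB Require Import structures.
From mathcomp Require Import all_boot all_order all_algebra.
From mathcomp Require Import all_classical all_reals all_analysis.
Set Implicit Arguments. Unset Strict Implicit. Unset Printing Implicit Defensive.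
Import Order.TTheory GRing.Theory Num.Theory.
Local Open Scope classical_set_scope.
Local Open Scope ring_scope.

Definition scons (R : Type) (x : R) (s : nat -> R) : nat -> R :=
  fun i => match i with O => x | S j => s j end.

Fixpoint cube_int (R : realType) (n : nat) (t : R)
  (F : (nat -> R) -> \bar R) : \bar R :=
  match n with
  | O => F (fun _ => 0)
  | S n' => (\int[@lebesgue_measure R]_(x in `[0%R, t]%classic)
               cube_int n' t (fun s => F (scons x s)))%E
  end.

(* Phi_m with variables s_1..s_m stored as s 0 .. s (m-1); cyclic convention
   s_{m+1} = s_1 becomes index (k+1) %% m. *)
Definition Phi (R : realType) (mm lam eps : R) (m : nat) (s : nat -> R) : R :=
  \prod_(k < m)
     (lam ^+ 2 * expR (mm * (s k + s ((k.+1) %% m)%N)) /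
      (2 * pi * (s k + s ((k.+1) %% m)%N + 2 * eps ^+ 2))).

From HB Require Import structures.
From mathcomp Require Import all_boot all_order all_algebra.
From mathcomp Require Import all_classical all_reals all_analysis.
From mathcomp Require Import ring lra.
Set Implicit Arguments. Unset Strict Implicit.
Import Order.TTheory GRing.Theory Num.Theory numFieldNormedType.Exports.
Local Open Scope classical_set_scope.
Local Open Scope ring_scope.

(* Write b = eps^2, K(x, y) = 1 / (x + y + 2b) and w(x) = 1 / sqrt(x + b).  On
   [0, t]^2 each cyclic factor of Phi_m is at most C K(s_k, s_{k+1}) with
   C = lam^2 e^(2 max(mm, 0) t) / (2 pi), and by AM-GM the factor closing the
   cycle satisfies K(s_m, s_1) <= w(s_m) w(s_1) / 2, which opens the cycle into
   the chain w(s_1) K(s_1, s_2) ... K(s_(m-1), s_m) w(s_m).  The weight w is a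
   Schur test function for K: an arctangent primitive gives
   \int_0^t K(x, y) w(y) dy <= pi w(x).  Integrating the chain from its far end
   thus costs a factor pi per kernel, and what is left is
   \int_0^t w(x)^2 dx = log (1 + t / b).  This proves the bound with an extra
   factor 1/2. *)

(* No measurability is needed: the integral of a nonnegative function is the
   supremum of the integrals of the simple functions below it. *)
Lemma ge0_le_integral_pointwise (d : measure_display) (T : measurableType d)
    (R : realType) (mu : {measure set T -> \bar R}) (D : set T) (f g : T -> \bar R) :
  (forall x, D x -> (0 <= f x)%E) -> (forall x, D x -> (f x <= g x)%E) ->
  (\int[mu]_(x in D) f x <= \int[mu]_(x in D) g x)%E.
Proof.
move=> f0 fg; have g0 x (Dx : D x) : (0 <= g x)%E := le_trans (f0 x Dx) (fg x Dx).
rewrite (ge0_integralE _ f0) (ge0_integralE _ g0).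
apply: ge_ereal_sup => _ [h hf <-]; apply: ereal_sup_ubound; exists h => // x.
apply: le_trans (hf x) _; rewrite /patch; case: ifP => // /[1!inE]; exact: fg.
Qed.

Section cube_integral.
Variables (R : realType) (t : R).
Hypothesis t_ge0 : 0 <= t.

Definition in_cube (s : nat -> R) := forall i, 0 <= s i <= t.

Lemma in_cube_scons x s : 0 <= x <= t -> in_cube s -> in_cube (scons x s).
Proof. by move=> hx hs [|i] /=. Qed.

Lemma in_cube0 : in_cube (fun _ => 0).
Proof. by move=> i; rewrite lexx t_ge0. Qed.

Lemma in_cube_ge0 s : in_cube s -> forall i, 0 <= s i.
Proof. by move=> s_in i; case/andP: (s_in i). Qed.

Lemma cube_int_ge0 n (F : (nat -> R) -> \bar R) :
  (forall s, in_cube s -> (0 <= F s)%E) -> (0 <= cube_int n t F)%E.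
Proof.
elim: n F => [|n IH] F F0 /=; first exact/F0/in_cube0.
apply: integral_ge0 => x /= /[1!in_itv] /= hx.
by apply: IH => s hs; apply/F0/in_cube_scons.
Qed.

Lemma le_cube_int n (F G : (nat -> R) -> \bar R) :
  (forall s, in_cube s -> (0 <= F s)%E) ->
  (forall s, in_cube s -> (F s <= G s)%E) -> (cube_int n t F <= cube_int n t G)%E.
Proof.
elim: n F G => [|n IH] F G F0 FG /=; first exact/FG/in_cube0.
apply: ge0_le_integral_pointwise => x /= /[1!in_itv] /= hx.
  by apply: cube_int_ge0 => s hs; apply/F0/in_cube_scons.
by apply: IH => s hs; [apply: F0 | apply: FG]; exact: in_cube_scons.
Qed.

End cube_integral.

Section primitives.
Variable R : realType.

Lemma is_derive_continuous (f : R -> R) (x df : R) :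
  is_derive x 1 f df -> {for x, continuous f}.
Proof. by case=> /derivable1_diffP/differentiable_continuous. Qed.

Lemma integral_primitive (F f : R -> R) (a b : R) : a < b ->
  (forall x, a <= x <= b -> is_derive x 1 F (f x)) ->
  (forall x, a <= x <= b -> {for x, continuous f}) ->
  (\int[@lebesgue_measure R]_(x in `[a, b]) (f x)%:E = (F b - F a)%:E)%E.
Proof.
move=> ab dF cf; rewrite EFinB; apply: continuous_FTC2 => //.
- by apply: continuous_in_subspaceT => x /[1!inE] /= /[1!in_itv] /= /cf.
- split.
  + by move=> x /[1!in_itv] /= /andP[ax xb]; have [] := dF x; rewrite ?ltW.
  + apply/cvg_at_right_filter/(is_derive_continuous (dF a _)).
    by rewrite lexx ltW.
  + apply/cvg_at_left_filter/(is_derive_continuous (dF b _)).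
    by rewrite lexx ltW.
- move=> x /[1!in_itv] /= /andP[ax xb]; rewrite derive1E.
  by apply: derive_val; apply: dF; rewrite !ltW.
Qed.

Lemma continuous_addr (b x : R) : {for x, continuous (fun z : R => z + b)}.
Proof. exact: (is_derive_continuous (is_derive_shift x 1 b)). Qed.

Definition atan_primitive (a b z : R) :=
  2 / Num.sqrt a * atan (Num.sqrt (z + b) / Num.sqrt a).

Lemma is_derive_atan_primitive (a b y : R) : 0 < a -> 0 < y + b ->
  is_derive y 1 (atan_primitive a b) ((y + (a + b)) * Num.sqrt (y + b))^-1.
Proof.
move=> a_gt0 yb_gt0.
have dsqrt := is_derive1_comp (g := shift b) (is_derive1_sqrt yb_gt0) (is_derive_shift y 1 b).
have dquot := is_deriveM dsqrt (is_derive_cst (Num.sqrt a)^-1 y 1).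
have datan := is_derive1_comp (is_derive1_atan _) dquot.
apply: is_derive_eq (is_deriveM (is_derive_cst (2 / Num.sqrt a) y 1) datan) _.
rewrite /= !scaler0 !addr0 mulr1 add0r expr_div_n !sqr_sqrtr ?ltW //.
have sa_gt0 : 0 < Num.sqrt a by rewrite sqrtr_gt0.
have sy_gt0 : 0 < Num.sqrt (y + b) by rewrite sqrtr_gt0.
have ea : a = Num.sqrt a ^+ 2 by rewrite sqr_sqrtr ?ltW.
have ey : y + b = Num.sqrt (y + b) ^+ 2 by rewrite sqr_sqrtr ?ltW.
set p := Num.sqrt a in sa_gt0 ea *; set q := Num.sqrt (y + b) in sy_gt0 ey *.
rewrite [y + _]addrCA ea ey; clearbody p q.
have pq_neq0 : p ^+ 2 + q ^+ 2 != 0 by rewrite gt_eqF // addr_gt0 // exprn_gt0.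
change (2 / p * ((1 + q ^+ 2 / p ^+ 2)^-1 * (p^-1 * (2 * q)^-1))
  = ((p ^+ 2 + q ^+ 2) * q)^-1).
by field; rewrite pq_neq0 !gt_eqF.
Qed.

Lemma integral_atan_kernel_le (a b c t : R) : 0 < a -> 0 < b -> 0 <= c -> 0 < t ->
  (\int[@lebesgue_measure R]_(y in `[0%R, t])
     (c / ((y + (a + b)) * Num.sqrt (y + b)))%:E <= (c * pi / Num.sqrt a)%:E)%E.
Proof.
move=> a_gt0 b_gt0 c_ge0 t_gt0.
have yb_gt0 y : 0 <= y -> 0 < y + b by move=> y_ge0; rewrite ltr_wpDl.
have dF y : 0 <= y <= t -> is_derive y 1 (fun z => c * atan_primitive a b z)
    (c / ((y + (a + b)) * Num.sqrt (y + b))).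
  move=> /andP[y_ge0 _].
  apply: is_derive_eq (is_deriveM (is_derive_cst c y 1)
    (is_derive_atan_primitive a_gt0 (yb_gt0 y y_ge0))) _.
  by rewrite /= scaler0 addr0.
have cf y : 0 <= y <= t ->
    {for y, continuous (fun y => c / ((y + (a + b)) * Num.sqrt (y + b)))}.
  move=> /andP[y_ge0 _]; have yb := yb_gt0 y y_ge0.
  apply: (@continuousM _ _ (cst c)); first exact: cvg_cst.
  apply: (@continuousV _ _ (fun z => (z + (a + b)) * Num.sqrt (z + b))).
    by rewrite gt_eqF // mulr_gt0 ?sqrtr_gt0 //; lra.
  apply: (@continuousM _ _ (fun z => z + (a + b)) (fun z => Num.sqrt (z + b))).
    exact: continuous_addr.
  apply: (@continuous_comp _ _ _ (fun z => z + b) Num.sqrt); first exact: continuous_addr.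
  exact: sqrt_continuous.
rewrite (integral_primitive t_gt0 dF cf) lee_fin -mulrBr -mulrA ler_wpM2l //.
have sa_gt0 : 0 < Num.sqrt a by rewrite sqrtr_gt0.
have atan0_ge0 : 0 <= atan (Num.sqrt (0 + b) / Num.sqrt a).
  by rewrite -(atan0 R) le_atan // divr_ge0 ?sqrtr_ge0 // ltW.
have := atan_ltpi2 (Num.sqrt (t + b) / Num.sqrt a).
have -> : pi / Num.sqrt a = 2 / Num.sqrt a * (pi / 2) by field; rewrite gt_eqF.
rewrite /atan_primitive -mulrBr => atant_lt.
by rewrite ler_wpM2l ?divr_ge0 ?(ltW sa_gt0) //; lra.
Qed.

Lemma integral_inv_addr (b c t : R) : 0 < b -> 0 < t ->
  (\int[@lebesgue_measure R]_(y in `[0%R, t]) (c / (y + b))%:E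
    = (c * ln (1 + t / b))%:E)%E.
Proof.
move=> b_gt0 t_gt0.
have yb_gt0 y : 0 <= y -> 0 < y + b by move=> y_ge0; rewrite ltr_wpDl.
have dF y : 0 <= y <= t -> is_derive y 1 (fun z => c * ln (z + b)) (c / (y + b)).
  move=> /andP[y_ge0 _].
  have dln := is_derive1_comp (g := shift b) (is_derive1_ln (yb_gt0 y y_ge0))
    (is_derive_shift y 1 b).
  apply: is_derive_eq (is_deriveM (is_derive_cst c y 1) dln) _.
  by rewrite /= scaler0 addr0 mulr1.
have cf y : 0 <= y <= t -> {for y, continuous (fun y => c / (y + b))}.
  move=> /andP[y_ge0 _].
  apply: (@continuousM _ _ (cst c)); first exact: cvg_cst.
  apply: (@continuousV _ _ (fun z => z + b)); last exact: continuous_addr.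
  by rewrite gt_eqF // yb_gt0.
rewrite (integral_primitive t_gt0 dF cf) add0r -mulrBr -ln_div ?posrE ?yb_gt0 ?ltW //.
by rewrite mulrDl divff ?gt_eqF // addrC.
Qed.

End primitives.

Section kernel_chain.
Variables (R : realType) (b : R).
Hypothesis b_gt0 : 0 < b.

Definition kernel (x y : R) := (x + y + 2 * b)^-1.

Definition weight (x : R) := (Num.sqrt (x + b))^-1.

Lemma addb_gt0 (x : R) : 0 <= x -> 0 < x + b.
Proof. by move=> x_ge0; rewrite ltr_wpDl. Qed.

Lemma kernel_gt0 (x y : R) : 0 <= x -> 0 <= y -> 0 < kernel x y.
Proof.
move=> /addb_gt0 xb_gt0 /addb_gt0 yb_gt0; rewrite invr_gt0; lra.
Qed.

Lemma weight_gt0 (x : R) : 0 <= x -> 0 < weight x.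
Proof. by move=> x_ge0; rewrite invr_gt0 sqrtr_gt0 addb_gt0. Qed.

(* AM-GM: 2 sqrt(x + b) sqrt(y + b) <= (x + b) + (y + b). *)
Lemma kernel_le_weight (x y : R) : 0 <= x -> 0 <= y -> kernel x y <= weight x * weight y / 2.
Proof.
move=> x_ge0 y_ge0.
have -> : kernel x y = ((x + b) + (y + b))^-1 by rewrite /kernel; congr _^-1; ring.
rewrite /weight; set p := Num.sqrt (x + b); set q := Num.sqrt (y + b).
have p_gt0 : 0 < p by rewrite sqrtr_gt0 addb_gt0.
have q_gt0 : 0 < q by rewrite sqrtr_gt0 addb_gt0.
have ex : x + b = p ^+ 2 by rewrite sqr_sqrtr // ltW // addb_gt0.
have ey : y + b = q ^+ 2 by rewrite sqr_sqrtr // ltW // addb_gt0.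
rewrite ex ey; clearbody p q.
have -> : p^-1 * q^-1 / 2 = (2 * p * q)^-1 by field; rewrite !gt_eqF.
rewrite lef_pV2 ?posrE ?mulr_gt0 ?addr_gt0 ?exprn_gt0 //.
by have := sqr_ge0 (p - q); nra.
Qed.

Lemma integral_kernel_weight_le (t c x : R) : 0 < t -> 0 <= c -> 0 <= x ->
  (\int[@lebesgue_measure R]_(y in `[0%R, t]) (c * kernel x y * weight y)%:E
    <= (c * pi * weight x)%:E)%E.
Proof.
move=> t_gt0 c_ge0 x_ge0.
have kernel_weightE y :
    c * kernel x y * weight y = c / ((y + ((x + b) + b)) * Num.sqrt (y + b)).
  by rewrite /kernel /weight -mulrA -invfM; congr (c * (_ * _)^-1); ring.
under eq_integral do rewrite kernel_weightE.
exact: integral_atan_kernel_le (addb_gt0 x_ge0) b_gt0 c_ge0 t_gt0.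
Qed.

Definition kernel_chain (n : nat) (s : nat -> R) :=
  (\prod_(k < n) kernel (s k) (s k.+1)) * weight (s n).

Lemma kernel_chain_ge0 n (s : nat -> R) : (forall i, 0 <= s i) -> 0 <= kernel_chain n s.
Proof.
move=> s_ge0; apply: mulr_ge0; last exact/ltW/weight_gt0.
by apply: prodr_ge0 => k _; exact/ltW/kernel_gt0.
Qed.

Lemma kernel_chainS n (x : R) (s : nat -> R) :
  kernel_chain n.+1 (scons x s) = kernel x (s 0) * kernel_chain n s.
Proof. by rewrite /kernel_chain big_ord_recl mulrA. Qed.

Lemma cube_int_kernel_chain_le (t c x : R) n : 0 < t -> 0 <= c -> 0 <= x ->
  (cube_int n t (fun s => (c * kernel_chain n (scons x s))%:E)
    <= (c * pi ^+ n * weight x)%:E)%E.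
Proof.
move=> t_gt0; elim: n c x => [|n IH] c x c_ge0 x_ge0.
  by rewrite /= /kernel_chain big_ord0 mul1r expr0 mulr1.
have cpi_ge0 : 0 <= c * pi ^+ n by rewrite mulr_ge0 // exprn_ge0 // ltW // pi_gt0.
rewrite [cube_int _ _ _]/= exprSr mulrA.
apply: le_trans (integral_kernel_weight_le t_gt0 cpi_ge0 x_ge0).
apply: ge0_le_integral_pointwise => y /= /[1!in_itv] /= /andP[y_ge0 _].
- apply: (cube_int_ge0 (ltW t_gt0)) => s s_in.
  rewrite lee_fin mulr_ge0 // kernel_chain_ge0 // => -[|[|i]] //=.
  exact: (in_cube_ge0 s_in).
- have -> : (fun s => (c * kernel_chain n.+1 (scons x (scons y s)))%:E) =
            (fun s => (c * kernel x y * kernel_chain n (scons y s))%:E).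
    by apply: funext => s; rewrite kernel_chainS mulrA.
  rewrite -[c * pi ^+ n * _]mulrA [pi ^+ n * _]mulrC mulrA.
  by apply: IH; rewrite // mulr_ge0 // ltW // kernel_gt0.
Qed.

Lemma weight_sqr (x : R) : 0 <= x -> weight x * weight x = (x + b)^-1.
Proof. by move=> x_ge0; rewrite /weight -invfM -expr2 sqr_sqrtr // ltW // addb_gt0. Qed.

Lemma cube_int_cyclic_chain_le (t c : R) n : 0 < t -> 0 <= c ->
  (cube_int n.+1 t (fun s => (c * weight (s 0) * kernel_chain n s)%:E)
    <= (c * pi ^+ n * ln (1 + t / b))%:E)%E.
Proof.
move=> t_gt0 c_ge0.
have cpi_ge0 : 0 <= c * pi ^+ n by rewrite mulr_ge0 // exprn_ge0 // ltW // pi_gt0.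
rewrite -(integral_inv_addr (c * pi ^+ n) b_gt0 t_gt0) [cube_int _ _ _]/=.
apply: ge0_le_integral_pointwise => x /= /[1!in_itv] /= /andP[x_ge0 _].
- apply: (cube_int_ge0 (ltW t_gt0)) => s s_in.
  have s_ge0 i : 0 <= scons x s i by case: i => [|i] //=; exact: (in_cube_ge0 s_in).
  rewrite lee_fin; apply: mulr_ge0 (kernel_chain_ge0 _ s_ge0).
  by rewrite mulr_ge0 // ltW // weight_gt0.
- have cw_ge0 : 0 <= c * weight x by rewrite mulr_ge0 // ltW // weight_gt0.
  apply: le_trans (cube_int_kernel_chain_le n t_gt0 cw_ge0 x_ge0) _.
  rewrite lee_fin -weight_sqr //.
  by have -> : c * weight x * pi ^+ n * weight x = c * pi ^+ n * (weight x * weight x)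
    by ring.
Qed.

End kernel_chain.

Section Phi_bound.
Variables (R : realType) (mm lam eps t : R).

Definition Phi_factor (x y : R) :=
  lam ^+ 2 * expR (mm * (x + y)) / (2 * pi * (x + y + 2 * eps ^+ 2)).

Lemma PhiE m (s : nat -> R) :
  Phi mm lam eps m s = \prod_(k < m) Phi_factor (s k) (s (k.+1 %% m)%N).
Proof. by []. Qed.

Definition Phi_const := lam ^+ 2 * expR (Num.max mm 0 * t) ^+ 2 / (2 * pi).

Lemma Phi_const_ge0 : 0 <= Phi_const.
Proof.
by apply: divr_ge0; rewrite mulr_ge0 ?sqr_ge0 // ltW // pi_gt0.
Qed.

Lemma Phi_factor_le (x y : R) : 0 <= x <= t -> 0 <= y <= t ->
  0 <= Phi_factor x y <= Phi_const * kernel (eps ^+ 2) x y.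
Proof.
move=> /andP[x_ge0 x_le] /andP[y_ge0 y_le].
have pi_gt0 := pi_gt0 R.
have den_ge0 : 0 <= x + y + 2 * eps ^+ 2 by rewrite !addr_ge0 // mulr_ge0 // sqr_ge0.
have A_ge0 : 0 <= lam ^+ 2 / (2 * pi) * (x + y + 2 * eps ^+ 2)^-1.
  by rewrite mulr_ge0 ?invr_ge0 // divr_ge0 ?sqr_ge0 // mulr_ge0 // ltW.
have -> : Phi_factor x y =
    lam ^+ 2 / (2 * pi) * (x + y + 2 * eps ^+ 2)^-1 * expR (mm * (x + y)).
  by rewrite /Phi_factor invfM; ring.
have -> : Phi_const * kernel (eps ^+ 2) x y =
    lam ^+ 2 / (2 * pi) * (x + y + 2 * eps ^+ 2)^-1 * expR (Num.max mm 0 * t) ^+ 2.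
  by rewrite /Phi_const /kernel; ring.
rewrite mulr_ge0 ?expR_ge0 //= ler_wpM2l // expr2 -expRD ler_expR.
have mm_le : mm <= Num.max mm 0 by rewrite le_max lexx.
have max_ge0 : 0 <= Num.max mm 0 by rewrite le_max lexx orbT.
move: (Num.max mm 0) mm_le max_ge0 => M mm_le M_ge0; nra.
Qed.

Lemma Phi_le_kernel_chain n (s : nat -> R) : 0 < eps -> in_cube t s ->
  0 <= Phi mm lam eps n.+1 s <=
  Phi_const ^+ n.+1 / 2 * weight (eps ^+ 2) (s 0) * kernel_chain (eps ^+ 2) n s.
Proof.
move=> eps_gt0 s_in; have b_gt0 : 0 < eps ^+ 2 by rewrite exprn_gt0.
have s_ge0 := in_cube_ge0 s_in.
rewrite PhiE big_ord_recr /= modnn.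
under eq_bigr => i _ do rewrite (@modn_small i.+1 n.+1) ?ltnS //.
have /andP[path_ge0 path_le] : 0 <= \prod_(i < n) Phi_factor (s i) (s i.+1) <=
    Phi_const ^+ n * \prod_(i < n) kernel (eps ^+ 2) (s i) (s i.+1).
  have <- : \prod_(i < n) (Phi_const * kernel (eps ^+ 2) (s i) (s i.+1)) =
      Phi_const ^+ n * \prod_(i < n) kernel (eps ^+ 2) (s i) (s i.+1).
    by rewrite prodrMl card_ord.
  rewrite prodr_ge0 => [|i _]; last by case/andP: (Phi_factor_le (s_in i) (s_in i.+1)).
  by apply: ler_prod => i _; exact: Phi_factor_le.
have /andP[last_ge0 last_le] : 0 <= Phi_factor (s n) (s 0) <=
    Phi_const * (weight (eps ^+ 2) (s n) * weight (eps ^+ 2) (s 0) / 2).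
  case/andP: (Phi_factor_le (s_in n) (s_in 0)) => -> /le_trans; apply.
  by rewrite ler_wpM2l ?Phi_const_ge0 // kernel_le_weight.
rewrite mulr_ge0 //= (le_trans (ler_pM path_ge0 last_ge0 path_le last_le)) //.
by rewrite /kernel_chain [Phi_const ^+ n.+1]exprS le_eqVlt; apply/predU1l; ring.
Qed.

Lemma Phi_const_expr n : Phi_const ^+ n.+1 * pi ^+ n =
  (lam * expR (Num.max mm 0 * t)) ^+ (2 * n.+1) / (2 ^+ n.+1 * pi).
Proof.
rewrite /Phi_const exprM !exprMn !exprVn !exprMn [pi ^+ n.+1]exprS.
have : pi != 0 :> R by rewrite gt_eqF // pi_gt0.
by move: (pi : R) => p p_neq0; field; rewrite p_neq0 !expf_neq0 // pnatr_eq0.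
Qed.

End Phi_bound.

Theorem mainTheorem9 (R : realType) (mm lam eps t : R) (m : nat)
  (hlam : 0 < lam) (heps : 0 < eps) (ht : 0 < t) (hm : (1 <= m)%N) :
  (cube_int m t (fun s => (Phi mm lam eps m s)%:E) <=
   ((lam * expR (Num.max mm 0 * t)) ^+ (2 * m) / (2 ^+ m * pi)
      * ln (1 + t / eps ^+ 2))%:E)%E.
Proof.
case: m hm => [//|n] _.
have b_gt0 : 0 < eps ^+ 2 by rewrite exprn_gt0.
set C := Phi_const mm lam t.
apply: le_trans.
  apply: (@le_cube_int _ _ (ltW ht) n.+1 _ (fun s =>
    (C ^+ n.+1 / 2 * weight (eps ^+ 2) (s 0) * kernel_chain (eps ^+ 2) n s)%:E)).
- by move=> s /(Phi_le_kernel_chain mm lam n heps) /andP[].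
- by move=> s /(Phi_le_kernel_chain mm lam n heps) /andP[].
apply: le_trans (cube_int_cyclic_chain_le b_gt0 n ht _) _.
  by rewrite divr_ge0 // exprn_ge0 // Phi_const_ge0.
have L_ge0 : 0 <= ln (1 + t / eps ^+ 2) by rewrite ln_ge0 // lerDl divr_ge0 // ltW.
have P_ge0 : 0 <= C ^+ n.+1 * pi ^+ n * ln (1 + t / eps ^+ 2).
  by rewrite !mulr_ge0 ?exprn_ge0 ?Phi_const_ge0 // ltW // pi_gt0.
rewrite -Phi_const_expr -/C lee_fin.
have -> : C ^+ n.+1 / 2 * pi ^+ n * ln (1 + t / eps ^+ 2) =
  C ^+ n.+1 * pi ^+ n * ln (1 + t / eps ^+ 2) / 2 by ring.
lra.
Qed.
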